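(* Let $A$ be a real $N\times N$ matrix, $B$ a real $N\times m$ matrix and $K$ a real $m\times N$ matrix, and set $A_1=-BK$. Suppose there exist symmetric $N\times N$ matrices $P>0$ and $Q>0$ such that $(A+A_1)^\top P+P(A+A_1)=-Q$, so that $V(x)=x^\top P x$ is a Lyapunov function for the continuous closed-loop system $\dot x(t)=(A+A_1)x(t)$, with $\dot V(x)=-x^\top Q x<0$ for $x\neq 0$. Then there is a constant $c'>0$ such that, for every hold length $$\Delta\le c'\,\frac{\sigma_{\min}(Q)}{\sigma_{\max}(P)\,\big(\sigma_{\max}(A)+\sigma_{\max}(A_1)\big)^2},$$ the sampled-data (piecewise-constant control) system $$\dot x(t)=Ax(t)+A_1x(t_k),\qquad t\in[t_k,t_{k+1}),\ k=0,1,\dots,$$ with sampling instants satisfying $t_{k+1}-t_k\le\Delta$, is asymptotically stable.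
   Context: $\sigma_{\min}(\cdot)$ and $\sigma_{\max}(\cdot)$ denote the minimum and maximum singular values of a matrix. The sampling instants $0=t_0<t_1<t_2<\cdots$ are such that the control $A_1x(t_k)$ is held constant on each holding period $[t_k,t_{k+1})$ (zero-order hold). $x(t)$ is the error state relative to the equilibrium $0$. *)

From HB Require Import structures.
From mathcomp Require Import all_boot all_order all_algebra.
From mathcomp Require Import all_classical all_reals all_analysis.
Set Implicit Arguments. Unset Strict Implicit. Unset Printing Implicit Defensive.
Import Order.TTheory GRing.Theory Num.Theory.
Import numFieldNormedType.Exports.
Local Open Scope classical_set_scope.
Local Open Scope ring_scope.

Section Defs.
Variable R : realType.

Definition vnorm (n : nat) (v : 'cV[R]_n) : R :=
  Num.sqrt (\sum_(i < n) v i ord0 ^+ 2).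

Definition posdef (n : nat) (P : 'M[R]_n) : Prop :=
  P^T = P /\ forall x : 'cV[R]_n, x != 0 -> 0 < (x^T *m P *m x) ord0 ord0.

Definition singvals (p q : nat) (M : 'M[R]_(p, q)) : set R :=
  [set s | 0 <= s /\ eigenvalue (M^T *m M) (s ^+ 2)].

Definition smax (p q : nat) (M : 'M[R]_(p, q)) : R := sup (singvals M).
Definition smin (n : nat) (M : 'M[R]_n) : R := inf (singvals M).

Definition sampling (t : nat -> R) (Delta : R) : Prop :=
  [/\ t 0%N = 0,
      forall k, t k < t k.+1,
      forall k, t k.+1 - t k <= Delta
    & forall T, exists k, T <= t k].

Definition sd_solution (N : nat) (A A1 : 'M[R]_N) (t : nat -> R)
    (x : R -> 'cV[R]_N) : Prop :=
  (forall i : 'I_N, {within [set s : R | 0 <= s], continuous (fun s => x s i ord0)})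
  /\ forall (k : nat) (s : R), t k < s < t k.+1 -> forall i : 'I_N,
       is_derive s 1 (fun u => x u i ord0) ((A *m x s + A1 *m x (t k)) i ord0).

Definition asymp_stable (N : nat) (A A1 : 'M[R]_N) (t : nat -> R) : Prop :=
  (forall eps : R, 0 < eps -> exists2 delta : R, 0 < delta &
     forall x, sd_solution A A1 t x -> vnorm (x 0) < delta ->
       forall s, 0 <= s -> vnorm (x s) < eps)
  /\ exists2 delta : R, 0 < delta &
     forall x, sd_solution A A1 t x -> vnorm (x 0) < delta ->
       vnorm (x s) @[s --> +oo] --> 0.
End Defs.

From HB Require Import structures.
From mathcomp Require Import all_boot all_order all_algebra.
From mathcomp Require Import all_classical all_reals all_analysis.
From mathcomp Require Import ring lra.
Set Implicit Arguments. Unset Strict Implicit. Unset Printing Implicit Defensive.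
Import Order.TTheory GRing.Theory Num.Theory.
Import numFieldNormedType.Exports.
Local Open Scope classical_set_scope.
Local Open Scope ring_scope.

(* Along a sampled-data trajectory, write A x + A1 x(t_k) = (A + A1) x + A1 (x(t_k) - x).
   The Lyapunov equation turns the first part of the derivative of V(x) = x^T P x into
   -x^T Q x <= -q |x|^2, where q >= smin Q is the least eigenvalue of Q.  On a holding
   period of length at most Delta, Gronwall-type estimates give |x(s)| <= 2 |x(t_k)| and
   |x(s) - x(t_k)| <= 2 (s - t_k) L |x(t_k)| with L = smax A + smax A1, so the second part
   is at most a multiple of Delta smax(P) L^2 |x|^2.  Under the bound on Delta this leaves
   V' <= -(q/2) |x|^2 <= -(q / (2 smax P)) V on every holding period: V is nonincreasing
   and tends to 0, which gives both stability and attractivity because P > 0. *)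

Section BilinearForms.
Variable R : realFieldType.

Definition qform n (u : 'cV[R]_n) (M : 'M[R]_n) (v : 'cV[R]_n) : R :=
  (u^T *m M *m v) ord0 ord0.
Definition dotv n (u v : 'cV[R]_n) : R := qform u 1%:M v.

Variable n : nat.
Implicit Types (u v x y : 'cV[R]_n) (M S : 'M[R]_n).

Lemma dotvE u v : dotv u v = \sum_i u i ord0 * v i ord0.
Proof. by rewrite /dotv /qform mulmx1 mxE; apply: eq_bigr => i _; rewrite mxE. Qed.

Lemma qformE u M v : qform u M v = \sum_j (\sum_i u i ord0 * M i j) * v j ord0.
Proof.
rewrite /qform mxE; apply: eq_bigr => j _; rewrite mxE; congr (_ * _).
by apply: eq_bigr => i _; rewrite mxE.
Qed.

Lemma qform_mulmx u M v : qform u M v = dotv u (M *m v).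
Proof. by rewrite /dotv /qform mulmx1 mulmxA. Qed.

Lemma qform_trmx_mul m (M : 'M[R]_(m, n)) u v :
  qform u (M^T *m M) v = dotv (M *m u) (M *m v).
Proof. by rewrite /dotv /qform mulmx1 trmx_mul !mulmxA. Qed.

Lemma dotvC u v : dotv u v = dotv v u.
Proof. by rewrite !dotvE; apply: eq_bigr => i _; rewrite mulrC. Qed.

Lemma dotvv_ge0 u : 0 <= dotv u u.
Proof. by rewrite dotvE; apply: sumr_ge0 => i _; rewrite -expr2 sqr_ge0. Qed.

Lemma dotvv_eq0 u : (dotv u u == 0) = (u == 0).
Proof.
apply/idP/eqP => [|->]; last by rewrite dotvE big1 // => i _; rewrite mxE mul0r.
rewrite dotvE psumr_eq0 => [/allP u0|i _]; last by rewrite -expr2 sqr_ge0.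
apply/matrixP => i j; rewrite (ord1 j) mxE.
by have /= := u0 i (mem_index_enum i); rewrite mulf_eq0 orbb => /eqP.
Qed.

Lemma dotvv_gt0 u : u != 0 -> 0 < dotv u u.
Proof. by move=> u0; rewrite lt_def dotvv_eq0 u0 dotvv_ge0. Qed.

Lemma qform_sym u M v : M^T = M -> qform u M v = qform v M u.
Proof.
move=> sM; rewrite /qform.
transitivity ((u^T *m M *m v)^T ord0 ord0); first by rewrite [RHS]mxE.
by rewrite !trmx_mul trmxK sM mulmxA.
Qed.

Lemma qformDl u1 u2 M v : qform (u1 + u2) M v = qform u1 M v + qform u2 M v.
Proof. by rewrite /qform linearD /= !mulmxDl mxE. Qed.

Lemma qformDr u M v1 v2 : qform u M (v1 + v2) = qform u M v1 + qform u M v2.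
Proof. by rewrite /qform mulmxDr mxE. Qed.

Lemma qformZl a u M v : qform (a *: u) M v = a * qform u M v.
Proof. by rewrite /qform linearZ /= -!scalemxAl mxE. Qed.

Lemma qformZr a u M v : qform u M (a *: v) = a * qform u M v.
Proof. by rewrite /qform -scalemxAr mxE. Qed.

Lemma qformNr u M v : qform u M (- v) = - qform u M v.
Proof. by rewrite -scaleN1r qformZr mulN1r. Qed.

Lemma qformNM u M v : qform u (- M) v = - qform u M v.
Proof. by rewrite /qform mulmxN mulNmx mxE. Qed.

Lemma qform0l M v : qform 0 M v = 0.
Proof. by rewrite /qform trmx0 !mul0mx mxE. Qed.

Lemma qform_lyap x M S : S^T = S ->
  qform x (M^T *m S + S *m M) x = 2 * qform x S (M *m x).
Proof.
move=> sS; rewrite /qform mulmxDr mulmxDl mxE mulmxA -trmx_mul.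
rewrite -/(qform (M *m x) S x) (qform_sym _ x sS) /qform -!mulmxA; lra.
Qed.

Lemma qform_CauchySchwarz M x y : M^T = M -> (forall z, 0 <= qform z M z) ->
  qform x M y ^+ 2 <= qform x M x * qform y M y.
Proof.
move=> sM psd; set a := qform x M x; set b := qform x M y; set c := qform y M y.
have quad r : qform (x + r *: y) M (x + r *: y) = a + 2 * r * b + r ^+ 2 * c.
  rewrite qformDl !qformDr !qformZl !qformZr (qform_sym y x sM) -/a -/b -/c; lra.
have [c0|c_le0] := ltrP 0 c.
  have := psd (x + (- b / c) *: y); rewrite quad.
  have -> : a + 2 * (- b / c) * b + (- b / c) ^+ 2 * c = a - b ^+ 2 / c.
    by field; rewrite gt_eqF.
  by rewrite subr_ge0 ler_pdivrMr // mulrC.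
have c0 : c = 0 by apply/eqP; rewrite eq_le c_le0 psd.
suff -> : b = 0 by rewrite c0 expr0n mulr0.
apply/eqP/negPn/negP => b0; have := psd (x + (- (a + 1) / (2 * b)) *: y).
rewrite quad c0 mulr0 addr0.
have -> : a + 2 * (- (a + 1) / (2 * b)) * b = -1 by field.
by rewrite ler0N1.
Qed.

End BilinearForms.

Section EuclideanNorm.
Variables (R : realType) (n : nat).
Implicit Types (u v : 'cV[R]_n) (b : R).

Lemma vnormE u : vnorm u = Num.sqrt (dotv u u).
Proof. by rewrite /vnorm dotvE; congr Num.sqrt; apply: eq_bigr => i _; rewrite expr2. Qed.

Lemma vnorm_ge0 u : 0 <= vnorm u.
Proof. by rewrite vnormE sqrtr_ge0. Qed.

Lemma vnorm_sqr u : vnorm u ^+ 2 = dotv u u.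
Proof. by rewrite vnormE sqr_sqrtr // dotvv_ge0. Qed.

Lemma vnorm_le u b : 0 <= b -> (vnorm u <= b) = (dotv u u <= b ^+ 2).
Proof. by move=> b0; rewrite -vnorm_sqr ler_sqr ?nnegrE ?vnorm_ge0. Qed.

Lemma vnorm_lt u b : 0 <= b -> (vnorm u < b) = (dotv u u < b ^+ 2).
Proof. by move=> b0; rewrite -vnorm_sqr ltr_sqr ?nnegrE ?vnorm_ge0. Qed.

Lemma vnormN u : vnorm (- u) = vnorm u.
Proof. by rewrite !vnormE /dotv -scaleN1r qformZl qformZr !mulN1r opprK. Qed.

Lemma vnorm0 : vnorm (0 : 'cV[R]_n) = 0.
Proof. by rewrite vnormE /dotv qform0l sqrtr0. Qed.

Lemma dotv_le_vnorm u v : dotv u v <= vnorm u * vnorm v.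
Proof.
have [uv_le0|uv_gt0] := lerP (dotv u v) 0.
  by apply: le_trans uv_le0 _; rewrite mulr_ge0 ?vnorm_ge0.
rewrite -ler_sqr ?nnegrE ?mulr_ge0 ?vnorm_ge0 ?(ltW uv_gt0) // exprMn !vnorm_sqr.
exact: qform_CauchySchwarz (trmx1 _ _) (@dotvv_ge0 _ _).
Qed.

Lemma vnormD u v : vnorm (u + v) <= vnorm u + vnorm v.
Proof.
rewrite vnorm_le ?addr_ge0 ?vnorm_ge0 // /dotv !(qformDl, qformDr).
rewrite -/(dotv u u) -/(dotv u v) -/(dotv v u) -/(dotv v v) (dotvC v u).
by rewrite sqrrD !vnorm_sqr; have := dotv_le_vnorm u v; lra.
Qed.

Lemma qform_le_vnorm (M : 'M[R]_n) (p : R) (x y : 'cV[R]_n) :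
  0 <= p -> (forall z, vnorm (M *m z) <= p * vnorm z) ->
  qform x M y <= p * vnorm x * vnorm y.
Proof.
move=> p_ge0 M_le; rewrite qform_mulmx; apply: le_trans (dotv_le_vnorm _ _) _.
by rewrite [p * _]mulrC -mulrA ler_wpM2l ?vnorm_ge0.
Qed.

End EuclideanNorm.

Section QformContinuity.
Variable R : realType.

Lemma cvgr_sum (T : Type) (F : set_system T) {FF : Filter F} (I : Type)
    (r : seq I) (P : pred I) (f : I -> T -> R) (l : I -> R) :
  (forall i, f i x @[x --> F] --> l i) ->
  \sum_(i <- r | P i) f i x @[x --> F] --> \sum_(i <- r | P i) l i.
Proof.
move=> fl; rewrite -fct_sumE.
by elim/big_ind2 : _ => // [|g1 l1 g2 l2]; [exact: cvg_cst | exact: cvgD].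
Qed.

Lemma qform_cvg n (T : Type) (F : set_system T) {FF : Filter F} (M : 'M[R]_n)
    (x y : T -> 'cV[R]_n) (x0 y0 : 'cV[R]_n) :
  (forall i, x s i ord0 @[s --> F] --> x0 i ord0) ->
  (forall i, y s i ord0 @[s --> F] --> y0 i ord0) ->
  qform (x s) M (y s) @[s --> F] --> qform x0 M y0.
Proof.
move=> xl yl; under eq_cvg do rewrite qformE; rewrite qformE.
apply: cvgr_sum => j; apply: cvgM (yl j).
by apply: cvgr_sum => i; apply: cvgM (xl i) (cvg_cst _).
Qed.

Lemma qform_rV_continuous n (M : 'M[R]_n) :
  continuous (fun w : 'rV[R]_n => qform w^T M w^T).
Proof.
move=> w; apply: (qform_cvg (F := nbhs w)) => i;
  by under eq_cvg do rewrite mxE; rewrite mxE; exact: coord_continuous.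
Qed.

End QformContinuity.

Section RayleighQuotient.
Variables (R : realType) (n : nat).
Implicit Types (S : 'M[R]_n) (u v x : 'cV[R]_n).

Lemma qform_eigen S a u v : S *m v = a *: v -> qform u S v = a * dotv u v.
Proof. by move=> Sv; rewrite qform_mulmx Sv /dotv qformZr. Qed.

Lemma qform_attains_max S : (0 < n)%N ->
  exists2 v, dotv v v = 1 & forall x, qform x S x <= qform v S v * dotv x x.
Proof.
move=> n_gt0; pose sphere := [set w : 'rV[R]_n | dotv w^T w^T = 1].
have sphere_ne0 : sphere !=set0.
  pose i0 := Ordinal n_gt0; exists (\row_j (j == i0)%:R).
  rewrite /sphere /= dotvE (bigD1 i0) //= big1 ?addr0; first by rewrite !mxE eqxx mulr1.
  by move=> i /negbTE i_neq; rewrite !mxE i_neq mulr0.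
have sphere_compact : compact sphere.
  apply: bounded_closed_compact.
    apply: filterS (nbhs_pinfty_ge (num_real (1 : R))) => M M1 w sw /=.
    apply: le_trans M1; rewrite -[`|w|]/(mx_norm w) mx_normrE.
    apply: bigmax_le => // ij _; rewrite (ord1 ij.1) -(@expr_le1 _ 2) //.
    rewrite real_normK ?num_real // -sw dotvE (bigD1 ij.2) //= !mxE -expr2 lerDl.
    by apply: sumr_ge0 => i _; rewrite !mxE -expr2 sqr_ge0.
  by have := (continuous_closedP _).1 (qform_rV_continuous (M := 1%:M)) _ (@closed_eq R 1).
have [c sc cmax] := compact_EVT_max sphere_ne0 sphere_compact
  (continuous_subspaceT (qform_rV_continuous (M := S))).
exists c^T => [|x]; first by move: sc; rewrite inE.
have [->|x0] := eqVneq x 0; first by rewrite /dotv !qform0l mulr0.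
set r := Num.sqrt (dotv x x); have r_gt0 : 0 < r by rewrite sqrtr_gt0 dotvv_gt0.
have rd : r ^+ 2 = dotv x x by rewrite sqr_sqrtr // dotvv_ge0.
have /cmax : (r^-1 *: x)^T \in sphere.
  rewrite inE /sphere /= trmxK /dotv qformZl qformZr -/(dotv x x) -rd.
  by field; rewrite gt_eqF.
rewrite /= trmxK qformZl qformZr => le_c.
have -> : qform x S x = dotv x x * (r^-1 * (r^-1 * qform x S x)).
  by rewrite -rd; field; rewrite gt_eqF.
by rewrite mulrC; apply: ler_wpM2r => //; exact: dotvv_ge0.
Qed.

Lemma qform_max_eigen S l v : S^T = S ->
  (forall x, qform x S x <= l * dotv x x) -> qform v S v = l * dotv v v ->
  S *m v = l *: v.
Proof.
move=> sS le_l vl; pose T := l%:M - S.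
have qT u w : qform u T w = l * dotv u w - qform u S w.
  rewrite /T /dotv /qform mulmxBr mulmxBl mxE mul_mx_scalar mulmx1 -scalemxAl.
  by rewrite mxE [X in _ + X = _]mxE.
have sT : T^T = T by rewrite /T linearB /= tr_scalar_mx sS.
have T_psd z : 0 <= qform z T z by rewrite qT subr_ge0.
have T_v w : qform w T v = 0.
  apply/eqP; rewrite -sqrf_eq0 eq_le sqr_ge0 andbT.
  by have := qform_CauchySchwarz w v sT T_psd; rewrite [qform v T v]qT vl subrr mulr0.
have /eqP := T_v (T *m v); rewrite qform_mulmx dotvv_eq0.
by rewrite /T mulmxBl mul_scalar_mx subr_eq0 => /eqP <-.
Qed.

Lemma sym_qform_max S : (0 < n)%N -> S^T = S ->
  exists l v, [/\ v != 0, S *m v = l *: v & forall x, qform x S x <= l * dotv x x].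
Proof.
move=> n_gt0 sS; have [v v1 vmax] := qform_attains_max S n_gt0.
exists (qform v S v), v; split => //; first by rewrite -dotvv_eq0 v1 oner_neq0.
by apply: (qform_max_eigen sS vmax); rewrite v1 mulr1.
Qed.

Lemma sym_qform_min S : (0 < n)%N -> S^T = S ->
  exists l v, [/\ v != 0, S *m v = l *: v & forall x, l * dotv x x <= qform x S x].
Proof.
move=> n_gt0 sS; have sNS : (- S)^T = - S by rewrite linearN /= sS.
have [l [v [v0 Sv lmax]]] := sym_qform_max n_gt0 sNS.
exists (- l), v; split => //; first by rewrite -[S]opprK mulNmx Sv scaleNr.
by move=> x; have := lmax x; rewrite qformNM mulNr lerNl.
Qed.

Lemma sym_eigenvalueP S a : S^T = S ->
  reflect (exists2 v : 'cV[R]_n, S *m v = a *: v & v != 0) (eigenvalue S a).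
Proof.
move=> sS; apply: (iffP eigenvalueP) => [[w wS w0]|[v Sv v0]].
  by exists w^T; rewrite ?trmx_eq0 // -{1}sS -trmx_mul wS linearZ.
by exists v^T; rewrite ?trmx_eq0 // -{1}sS -trmx_mul Sv linearZ.
Qed.

Lemma smax_sqrt m (M : 'M[R]_(m, n)) : (0 < n)%N -> exists l,
  [/\ 0 <= l, smax M = Num.sqrt l & forall x, dotv (M *m x) (M *m x) <= l * dotv x x].
Proof.
move=> n_gt0; set S := M^T *m M; have sS : S^T = S by rewrite trmx_mul trmxK.
have [l [v [v0 Sv lmax]]] := sym_qform_max n_gt0 sS.
have l_ge0 : 0 <= l.
  have := dotvv_ge0 (M *m v); rewrite -qform_trmx_mul (qform_eigen _ Sv).
  by rewrite pmulr_lge0 // dotvv_gt0.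
exists l; split => //; last by move=> x; rewrite -qform_trmx_mul.
have sqrt_l : singvals M (Num.sqrt l).
  by split; [exact: sqrtr_ge0 | apply/sym_eigenvalueP => //; exists v; rewrite ?sqr_sqrtr].
have ub_sqrt_l : ubound (singvals M) (Num.sqrt l).
  move=> r [r_ge0 /sym_eigenvalueP-/(_ sS) [w Sw w0]].
  rewrite -(ger0_norm r_ge0) -sqrtr_sqr ler_wsqrtr //.
  by have := lmax w; rewrite (qform_eigen _ Sw) ler_pM2r // dotvv_gt0.
apply/eqP; rewrite eq_le ge_sup //=; last by exists (Num.sqrt l).
by apply: sup_upper_bound => //; split; exists (Num.sqrt l).
Qed.

Lemma smax_ge0 m (M : 'M[R]_(m, n)) : (0 < n)%N -> 0 <= smax M.
Proof. by move=> /(smax_sqrt M) [l [_ -> _]]; exact: sqrtr_ge0. Qed.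

Lemma vnorm_mulmx_le m (M : 'M[R]_(m, n)) x : (0 < n)%N ->
  vnorm (M *m x) <= smax M * vnorm x.
Proof.
move=> /(smax_sqrt M) [l [l_ge0 -> lmax]].
by rewrite vnorm_le ?mulr_ge0 ?sqrtr_ge0 ?vnorm_ge0 // exprMn sqr_sqrtr // vnorm_sqr.
Qed.

Lemma posdef_smin_bound Q : (0 < n)%N -> posdef Q ->
  exists q, [/\ 0 < q, smin Q <= q & forall x, q * dotv x x <= qform x Q x].
Proof.
move=> n_gt0 [sQ Q_pos]; have [l [v [v0 Qv lmin]]] := sym_qform_min n_gt0 sQ.
have l_gt0 : 0 < l.
  by have := Q_pos v v0; rewrite -/(qform v Q v) (qform_eigen _ Qv) pmulr_lgt0 // dotvv_gt0.
exists l; split => //; apply: ge_inf; first by exists 0 => r [].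
split; first exact: ltW.
apply/sym_eigenvalueP; first by rewrite trmx_mul trmxK.
by exists v => //; rewrite sQ -mulmxA Qv -scalemxAr Qv scalerA.
Qed.

End RayleighQuotient.

Section RealCalculus.
Variable R : realType.
Implicit Types (f g : R -> R) (s : R).

Lemma is_derive_mul f g s df dg : is_derive s 1 f df -> is_derive s 1 g dg ->
  is_derive s 1 (fun u => f u * g u) (df * g s + f s * dg).
Proof.
move=> fd gd; have -> : (fun u => f u * g u) = f * g by [].
by apply: is_derive_eq (is_deriveM fd gd) _; rewrite addrC /GRing.scale /= mulrC.
Qed.

Lemma is_derive_sumr m (f : 'I_m -> R -> R) (df : 'I_m -> R) s :
  (forall i, is_derive s 1 (f i) (df i)) ->
  is_derive s 1 (fun u => \sum_i f i u) (\sum_i df i).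
Proof.
move=> fd; have -> : (fun u => \sum_i f i u) = \sum_i f i by rewrite fct_sumE.
exact: is_derive_sum.
Qed.

Lemma is_derive_linear b s : is_derive s 1 (fun u => b * u) b.
Proof.
by apply: is_derive_eq (is_deriveZ b (is_derive_id s 1)) _; rewrite /GRing.scale /= mulr1.
Qed.

Lemma continuous_linear b : continuous (fun u : R => b * u).
Proof. by move=> u; apply: cvgM; [exact: cvg_cst | exact: cvg_id]. Qed.

Lemma nonincreasing_itv f a b : {within `[a, b], continuous f} ->
  (forall s, a < s < b -> exists2 d, is_derive s 1 f d & d <= 0) ->
  forall s s', a <= s -> s <= s' -> s' <= b -> f s' <= f s.
Proof.
move=> fc fd s s' a_s ss' s'_b.
apply: (ler0_derive1_le_cc _ _ fc); rewrite ?in_itv /= ?a_s ?s'_b ?(le_trans a_s ss') //.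
- by move=> u /fd [d fud _].
- by move=> u /fd [d fud d_le0]; rewrite derive1E derive_val.
by rewrite (le_trans ss' s'_b).
Qed.

End RealCalculus.

Section VectorCalculus.
Variables (R : realType) (n : nat).
Implicit Types (x y : R -> 'cV[R]_n) (M : 'M[R]_n).

Definition cV_is_derive x (s : R) (dx : 'cV[R]_n) :=
  forall i, is_derive s 1 (fun u => x u i ord0) (dx i ord0).

Definition cV_continuous_within (D : set R) x :=
  forall i, {within D, continuous (fun u => x u i ord0)}.

Lemma is_derive_qform M x y s dx dy : cV_is_derive x s dx -> cV_is_derive y s dy ->
  is_derive s 1 (fun u => qform (x u) M (y u)) (qform dx M (y s) + qform (x s) M dy).
Proof.
move=> dxs dys; rewrite !qformE -big_split /=.
have -> : (fun u => qform (x u) M (y u)) =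
    fun u => \sum_j (\sum_i x u i ord0 * M i j) * y u j ord0.
  by apply: funext => u; rewrite qformE.
apply: is_derive_sumr => j; apply: is_derive_mul (dys j).
apply: is_derive_sumr => i.
apply: is_derive_eq (is_derive_mul (dxs i) (is_derive_cst (M i j) s 1)) _.
by rewrite mulr0 addr0.
Qed.

Lemma is_derive_qform_sym M x s dx : M^T = M -> cV_is_derive x s dx ->
  is_derive s 1 (fun u => qform (x u) M (x u)) (2 * qform (x s) M dx).
Proof.
move=> sM xd; apply: is_derive_eq (is_derive_qform M xd xd) _.
by rewrite (qform_sym _ (x s) sM); ring.
Qed.

Lemma is_derive_dotvl (w : 'cV[R]_n) x s dx : cV_is_derive x s dx ->
  is_derive s 1 (fun u => dotv w (x u)) (dotv w dx).
Proof.
move=> xd; have wd : cV_is_derive (fun=> w) s 0.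
  by move=> i; rewrite mxE; exact: is_derive_cst.
by apply: is_derive_eq (is_derive_qform 1%:M wd xd) _; rewrite qform0l add0r.
Qed.

Lemma continuous_qform (D : set R) M x y :
  cV_continuous_within D x -> cV_continuous_within D y ->
  {within D, continuous (fun u => qform (x u) M (y u))}.
Proof. by move=> xc yc u; apply: qform_cvg => i; [exact: (xc i u) | exact: (yc i u)]. Qed.

End VectorCalculus.

Section SamplingInstants.
Variables (R : realType) (t : nat -> R).
Hypotheses (t0 : t 0%N = 0) (t_incr : forall k, t k < t k.+1).
Hypothesis t_unbounded : forall T, exists k, T <= t k.

Lemma sampling_ge0 k : 0 <= t k.
Proof. by rewrite -t0; apply: (nondecreasing_seqP t).1 => // j; exact: ltW. Qed.

Lemma piecewise_nonincreasing (F : R -> R) :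
  {within [set s | 0 <= s], continuous F} ->
  (forall k s, t k < s < t k.+1 -> exists2 d, is_derive s 1 F d & d <= 0) ->
  forall s s', 0 <= s -> s <= s' -> F s' <= F s.
Proof.
move=> Fc Fd.
have piece k : {in `[t k, t k.+1] &, {homo F : s s' /~ s <= s'}}.
  move=> s' s; rewrite !in_itv /= => /andP[_ s'_le] /andP[tk_s _] ss'.
  apply: nonincreasing_itv (Fd k) s s' tk_s ss' s'_le.
  apply: continuous_subspaceW Fc => u; rewrite /= in_itv /= => /andP[tk_u _].
  exact: le_trans (sampling_ge0 k) tk_u.
have upto k : {in `[0, t k] &, {homo F : s s' /~ s <= s'}}.
  elim: k => [|k IH] s' s; rewrite !in_itv /= => /andP[s'0 s'_le] /andP[s0 s_le] ss'.
    by rewrite t0 in s_le s'_le; have -> : s' = s by lra.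
  have [s'_le_tk|tk_lt_s'] := leP s' (t k).
    by apply: IH; rewrite // in_itv /= ?s0 ?s'0 ?s'_le_tk ?(le_trans ss' s'_le_tk).
  have [tk_le_s|s_lt_tk] := leP (t k) s.
    by apply: (piece k); rewrite // in_itv /= ?tk_le_s ?s_le ?(ltW tk_lt_s') ?s'_le.
  apply: (@le_trans _ _ (F (t k))).
    by apply: (piece k); rewrite ?in_itv /= ?lexx ?(ltW tk_lt_s') ?s'_le ?ltW.
  by apply: IH; rewrite ?in_itv /= ?s0 ?lexx ?sampling_ge0 ?ltW.
move=> s s' s0 ss'; have [k s'_le] := t_unbounded s'.
by apply: (upto k); rewrite // in_itv /= ?s0 ?(le_trans s0 ss') // (le_trans ss').
Qed.

Lemma piecewise_decay (F : R -> R) (c : R) : 0 < c ->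
  {within [set s | 0 <= s], continuous F} -> (forall s, 0 <= s -> 0 <= F s) ->
  (forall k s, t k < s < t k.+1 -> exists2 d, is_derive s 1 F d & d <= - c * F s) ->
  F s @[s --> +oo] --> 0.
Proof.
move=> c_gt0 Fc F_ge0 Fd.
have in_piece_ge0 k s : t k < s < t k.+1 -> 0 <= s.
  by case/andP => tk_s _; exact: le_trans (sampling_ge0 k) (ltW tk_s).
have Fdec : forall s s', 0 <= s -> s <= s' -> F s' <= F s.
  apply: piecewise_nonincreasing => // k s ks; have [d Fsd d_le] := Fd k s ks.
  exists d => //; apply: le_trans d_le _.
  by rewrite mulNr oppr_le0 mulr_ge0 ?(ltW c_gt0) ?F_ge0 ?(in_piece_ge0 k s ks).
have below e : 0 < e -> exists2 S, 0 <= S & F S < e.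
  move=> e_gt0; case: (boolp.pselect (exists2 S, 0 <= S & F S < e)) => // F_ge_e.
  have F_ge S : 0 <= S -> e <= F S.
    by move=> S0; rewrite leNgt; apply/negP => FS; apply: F_ge_e; exists S.
  (* otherwise [F + c e id] would be nonincreasing, although it grows linearly *)
  pose G u := F u + c * e * u.
  have Gdec : forall s s', 0 <= s -> s <= s' -> G s' <= G s.
    apply: piecewise_nonincreasing.
      have lin_c : {within [set s | 0 <= s], continuous (fun u => c * e * u)}.
        exact: continuous_subspaceT (@continuous_linear R (c * e)).
      by move=> u; apply: cvgD; [exact: (Fc u) | exact: (lin_c u)].
    move=> k s ks; have [d Fsd d_le] := Fd k s ks.
    exists (d + c * e); first exact: is_deriveD Fsd (is_derive_linear _ _).
    have : c * e <= c * F s by rewrite ler_pM2l // F_ge // (in_piece_ge0 k).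
    lra.
  pose S := F 0 / (c * e) + 1.
  have S0 : 0 <= S by rewrite addr_ge0 // divr_ge0 ?F_ge0 // ltW // mulr_gt0.
  have := Gdec 0 S (lexx 0) S0; have := F_ge S S0; rewrite /G mulr0 addr0.
  have -> : c * e * S = F 0 + c * e.
    by rewrite /S mulrDr mulr1 mulrC divfK // mulf_neq0 ?gt_eqF.
  have := mulr_gt0 c_gt0 e_gt0; lra.
apply/cvgrPdist_lt => e e_gt0; have [S S0 FS] := below e e_gt0.
exists S; split => [|s S_lt_s]; first exact: num_real.
rewrite sub0r normrN ger0_norm ?F_ge0 ?(le_trans S0 (ltW S_lt_s)) //.
exact: le_lt_trans (Fdec S s S0 (ltW S_lt_s)) FS.
Qed.

End SamplingInstants.

Section HoldingPeriod.
Variables (R : realType) (n : nat) (A A1 : 'M[R]_n) (a a1 : R).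
Hypotheses (a_ge0 : 0 <= a) (a1_ge0 : 0 <= a1).
Hypothesis A_le : forall y, vnorm (A *m y) <= a * vnorm y.
Hypothesis A1_le : forall y, vnorm (A1 *m y) <= a1 * vnorm y.

Lemma vnorm_field_le y z : vnorm (A *m y + A1 *m z) <= a * vnorm y + a1 * vnorm z.
Proof. exact: le_trans (vnormD _ _) (lerD (A_le y) (A1_le z)). Qed.

Lemma dotv_field_le y z :
  2 * dotv y (A *m y + A1 *m z) <= 2 * (a + a1) * (dotv y y + dotv z z).
Proof.
rewrite -!vnorm_sqr; have := dotv_le_vnorm y (A *m y + A1 *m z).
have := vnorm_field_le y z; have := vnorm_ge0 y; have := vnorm_ge0 z.
set Y := vnorm y; set Z := vnorm z; set W := vnorm _ => Z0 Y0 W_le dotv_le.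
have : Y * W <= Y * (a * Y + a1 * Z) by rewrite ler_wpM2l.
have := mulr_ge0 a1_ge0 (sqr_ge0 (Y - Z)); have := mulr_ge0 a1_ge0 (sqr_ge0 (Y + Z)).
have := mulr_ge0 a_ge0 (sqr_ge0 Z); lra.
Qed.

Variables (tk tk1 : R) (x : R -> 'cV[R]_n).
Hypothesis short : (tk1 - tk) * (a + a1) <= 1 / 4.
Hypothesis x_cont : cV_continuous_within `[tk, tk1] x.
Hypothesis x_deriv : forall s, tk < s < tk1 -> cV_is_derive x s (A *m x s + A1 *m x tk).

Lemma hold_vnorm_le s : tk <= s <= tk1 -> vnorm (x s) <= 2 * vnorm (x tk).
Proof.
case/andP => tk_s s_tk1; set L := a + a1; set Y := dotv (x tk) (x tk).
have L_ge0 : 0 <= L by rewrite addr_ge0.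
pose g u := 1 + 2 * L * tk - 2 * L * u.
have g_bounds u : tk <= u <= tk1 -> 1 / 2 <= g u <= 1.
  case/andP => tk_u u_tk1; have : (u - tk) * L <= 1 / 4.
    by apply: le_trans short; apply: ler_wpM2r => //; lra.
  have : 0 <= (u - tk) * L by rewrite mulr_ge0 // subr_ge0.
  by rewrite /g; lra.
(* [g] is a linear substitute for exp (-2 L (u - tk)); it absorbs the growth of the energy
   [|x|^2 + |x tk|^2], whose rate is at most [2 L] *)
pose h u := (dotv (x u) (x u) + Y) * g u.
have h_le : h s <= h tk.
  apply: (nonincreasing_itv (a := tk) (b := tk1)) => //.
    move=> u; apply: cvgM.
      apply: cvgD; last exact: cvg_cst.
      by apply: qform_cvg => i; exact: (@x_cont i u).
    apply: (continuous_subspaceT (f := g)) => v.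
    by apply: cvgB; [exact: cvg_cst | exact: continuous_linear].
  move=> u u_in; have xd := x_deriv u_in.
  have Ed : is_derive u 1 (fun v => dotv (x v) (x v) + Y)
      (2 * dotv (x u) (A *m x u + A1 *m x tk)).
    apply: is_derive_eq
      (is_deriveD (is_derive_qform_sym (trmx1 _ _) xd) (is_derive_cst Y u 1)) _.
    by rewrite addr0.
  have gd : is_derive u 1 g (- (2 * L)).
    apply: is_derive_eq (is_deriveB (is_derive_cst _ u 1) (is_derive_linear _ u)) _.
    by rewrite sub0r.
  set E := dotv (x u) (x u) + Y; set P := 2 * dotv (x u) (A *m x u + A1 *m x tk).
  exists (P * g u + E * - (2 * L)); first exact: is_derive_mul Ed gd.
  have /andP[g_ge g_le] : 1 / 2 <= g u <= 1.
    by apply: g_bounds; case/andP: u_in => *; rewrite !ltW.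
  have P_le : P <= 2 * L * E by exact: dotv_field_le.
  have LE_ge0 : 0 <= L * E by rewrite mulr_ge0 // addr_ge0 ?dotvv_ge0.
  have : P * g u <= 2 * L * E * g u by rewrite ler_wpM2r //; lra.
  have := mulr_ge0 LE_ge0 (_ : 0 <= 1 - g u); rewrite subr_ge0 => /(_ g_le).
  lra.
have /andP[gs_ge _] := g_bounds s (introT andP (conj tk_s s_tk1)).
have gtk : g tk = 1 by rewrite /g; ring.
move: h_le; rewrite /h gtk mulr1 -/Y => h_le.
rewrite vnorm_le ?mulr_ge0 ?vnorm_ge0 // exprMn vnorm_sqr -/Y expr2.
have : (dotv (x s) (x s) + Y) * (1 / 2) <= (dotv (x s) (x s) + Y) * g s.
  by rewrite ler_wpM2l // addr_ge0 ?dotvv_ge0.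
have := dotvv_ge0 (x tk); rewrite -/Y; lra.
Qed.

Lemma hold_drift_le s : tk <= s <= tk1 ->
  vnorm (x s - x tk) <= 2 * (s - tk) * (a + a1) * vnorm (x tk).
Proof.
case/andP => tk_s s_tk1; have [->|s_neq] := eqVneq s tk.
  by rewrite subrr vnorm0 subrr mulr0 !mul0r.
have tk_lt_s : tk < s by rewrite lt_neqAle eq_sym s_neq.
set w := x s - x tk; pose f u := dotv w (x u).
have [c c_in fc] : exists2 c, c \in `]tk, s[ &
    f s - f tk = dotv w (A *m x c + A1 *m x tk) * (s - tk).
  apply: MVT => // [u|].
    rewrite in_itv /= => /andP[tk_u u_s].
    by apply: is_derive_dotvl; apply: x_deriv; rewrite tk_u (lt_le_trans u_s).
  apply: (continuous_qform (M := 1%:M)).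
    by move=> i; apply: continuous_subspaceT => u; exact: cvg_cst.
  move=> i; apply: continuous_subspaceW (@x_cont i) => u /=; rewrite !in_itv /=.
  by case/andP => -> u_s; rewrite (le_trans u_s).
move: c_in; rewrite in_itv /= => /andP[tk_c c_s].
have X_le : vnorm (x c) <= 2 * vnorm (x tk).
  by apply: hold_vnorm_le; rewrite (ltW tk_c) (le_trans (ltW c_s) s_tk1).
have fw : f s - f tk = vnorm w ^+ 2 by rewrite vnorm_sqr /f /dotv -qformNr -qformDr.
rewrite fw in fc.
have := dotv_le_vnorm w (A *m x c + A1 *m x tk); have := vnorm_field_le (x c) (x tk).
set W := vnorm w; set X := vnorm (x c); set Y := vnorm (x tk); set D := vnorm (_ + _).
move=> D_le dotv_le; have W_ge0 : 0 <= W := vnorm_ge0 w.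
set K := 2 * (s - tk) * (a + a1) * Y.
have K_ge0 : 0 <= K.
  apply: mulr_ge0 (vnorm_ge0 _); apply: mulr_ge0 (addr_ge0 a_ge0 a1_ge0).
  by apply: mulr_ge0; rewrite ?subr_ge0 ?(ltW tk_lt_s).
have WD_le : W * D <= W * (2 * (a + a1) * Y).
  rewrite ler_wpM2l //; have := ler_wpM2l a_ge0 X_le; rewrite -/X -/Y.
  by have := mulr_ge0 a1_ge0 (vnorm_ge0 (x tk)); rewrite -/Y; lra.
have : W ^+ 2 <= W * K.
  have -> : W * K = W * (2 * (a + a1) * Y) * (s - tk) by rewrite /K; ring.
  by rewrite fc ler_wpM2r ?subr_ge0 ?(ltW tk_lt_s) // (le_trans dotv_le).
nra.
Qed.

End HoldingPeriod.

Section LyapunovDecrease.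
Variables (R : realType) (n : nat) (A A1 P Q : 'M[R]_n) (a a1 p q : R).
Hypotheses (a_ge0 : 0 <= a) (a1_ge0 : 0 <= a1) (p_ge0 : 0 <= p) (q_gt0 : 0 < q).
Hypothesis A_le : forall y, vnorm (A *m y) <= a * vnorm y.
Hypothesis A1_le : forall y, vnorm (A1 *m y) <= a1 * vnorm y.
Hypothesis P_le : forall y, vnorm (P *m y) <= p * vnorm y.
Hypothesis Q_ge : forall y, q * dotv y y <= qform y Q y.
Hypothesis P_sym : P^T = P.
Hypothesis lyap : (A + A1)^T *m P + P *m (A + A1) = - Q.

Lemma qform_closed_loop y : 2 * qform y P ((A + A1) *m y) = - qform y Q y.
Proof. by rewrite -qform_lyap // lyap qformNM. Qed.

Lemma closed_loop_vnorm_le y : vnorm ((A + A1) *m y) <= (a + a1) * vnorm y.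
Proof. by rewrite mulmxDl mulrDl vnorm_field_le. Qed.

Lemma lyap_rate_le : (0 < n)%N -> q <= 2 * (p * (a + a1)).
Proof.
move=> n_gt0; pose v : 'cV[R]_n := const_mx 1.
have v_gt0 : 0 < dotv v v.
  apply: dotvv_gt0; apply/eqP => /matrixP /(_ (Ordinal n_gt0) ord0) /eqP.
  by rewrite !mxE oner_eq0.
rewrite -(ler_pM2r v_gt0); apply: le_trans (Q_ge v) _.
rewrite -[qform v Q v]opprK -qform_closed_loop -mulrN -qformNr -vnorm_sqr.
have := qform_le_vnorm v (- ((A + A1) *m v)) p_ge0 P_le; rewrite vnormN.
have : p * vnorm v * vnorm ((A + A1) *m v) <= p * vnorm v * ((a + a1) * vnorm v).
  by rewrite ler_wpM2l ?mulr_ge0 ?vnorm_ge0 ?closed_loop_vnorm_le.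
lra.
Qed.

Lemma sampled_lyap_derivative_le Delta tau y z :
  Delta * (a + a1) <= 1 / 8 -> Delta * (p * (a + a1) ^+ 2) <= q / 16 ->
  0 <= tau <= Delta -> vnorm (y - z) <= 2 * tau * (a + a1) * vnorm z ->
  2 * qform y P (A *m y + A1 *m z) <= - (q / 2) * dotv y y.
Proof.
set L := a + a1 => DL DpL2 /andP[tau_ge0 tau_le] yz_le.
have L_ge0 : 0 <= L by rewrite addr_ge0.
have D_ge0 : 0 <= Delta := le_trans tau_ge0 tau_le.
have -> : A *m y + A1 *m z = (A + A1) *m y + A1 *m (z - y).
  by rewrite mulmxDl mulmxBr addrCA addrK addrC.
rewrite qformDr mulrDr qform_closed_loop.
set X := vnorm y; set E := vnorm (y - z); set Y := vnorm z.
have X_ge0 : 0 <= X := vnorm_ge0 y; have E_ge0 : 0 <= E := vnorm_ge0 (y - z).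
have E_le_Y : E <= 2 * (Delta * L) * Y.
  by apply: le_trans yz_le _; rewrite -!mulrA ler_wpM2l // ler_wpM2r // mulr_ge0 ?vnorm_ge0.
have Y_le : Y <= X + E.
  rewrite /Y -(subrKC y z); apply: le_trans (vnormD _ _) _.
  by rewrite -opprB vnormN.
have DL_ge0 : 0 <= Delta * L by rewrite mulr_ge0.
have E_le_X : E <= 8 / 3 * (Delta * L) * X.
  have E_le : E <= Y / 4.
    have : 2 * (Delta * L) * Y <= 2 * (1 / 8) * Y by rewrite ler_wpM2r ?vnorm_ge0 // ler_wpM2l.
    lra.
  have : 2 * (Delta * L) * Y <= 2 * (Delta * L) * (4 / 3 * X).
    by rewrite ler_wpM2l ?mulr_ge0 //; lra.
  lra.
have err_le : 2 * qform y P (A1 *m (z - y)) <= 16 / 3 * (Delta * (p * L ^+ 2)) * X ^+ 2.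
  apply: le_trans (ler_wpM2l _ (qform_le_vnorm y _ p_ge0 P_le)) _ => //.
  rewrite -/X -opprB mulmxN vnormN.
  have := ler_wpM2l (mulr_ge0 p_ge0 X_ge0) (A1_le (y - z)); rewrite -/E.
  have : p * X * (a1 * E) <= p * X * (L * (8 / 3 * (Delta * L) * X)).
    rewrite ler_wpM2l ?mulr_ge0 //; apply: le_trans (ler_wpM2l a1_ge0 E_le_X) _.
    by apply: ler_wpM2r; rewrite ?mulr_ge0 // /L lerDr.
  have -> : 16 / 3 * (Delta * (p * L ^+ 2)) * X ^+ 2 =
      2 * (p * X * (L * (8 / 3 * (Delta * L) * X))) by ring.
  lra.
have : 16 / 3 * (Delta * (p * L ^+ 2)) * X ^+ 2 <= 16 / 3 * (q / 16) * X ^+ 2.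
  by rewrite ler_wpM2r ?sqr_ge0 // ler_wpM2l.
have := Q_ge y; rewrite -vnorm_sqr -/X.
have := mulr_ge0 (ltW q_gt0) (sqr_ge0 X); lra.
Qed.

Section SampledTrajectories.
Variables (Delta : R) (t : nat -> R).
Hypotheses (DL : Delta * (a + a1) <= 1 / 8) (DpL2 : Delta * (p * (a + a1) ^+ 2) <= q / 16).
Hypothesis samp : sampling t Delta.

Lemma sd_lyap_derivative_le x : sd_solution A A1 t x ->
  forall k s, t k < s < t k.+1 -> exists2 d,
    is_derive s 1 (fun u => qform (x u) P (x u)) d & d <= - (q / 2) * dotv (x s) (x s).
Proof.
case: samp => t0 t_incr t_le _ [x_cont x_deriv] k s /andP[tk_s s_tk1].
have hold_cont : cV_continuous_within `[t k, t k.+1] x.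
  move=> i; apply: continuous_subspaceW (x_cont i) => u; rewrite /= in_itv /=.
  by case/andP => tk_u _; exact: le_trans (sampling_ge0 t0 t_incr k) tk_u.
have hold_deriv u : t k < u < t k.+1 -> cV_is_derive x u (A *m x u + A1 *m x (t k)).
  by move=> ku i; exact: x_deriv.
have short : (t k.+1 - t k) * (a + a1) <= 1 / 4.
  apply: le_trans (ler_wpM2r (addr_ge0 a_ge0 a1_ge0) (t_le k)) _.
  by apply: le_trans DL _; lra.
exists (2 * qform (x s) P (A *m x s + A1 *m x (t k))).
  by apply: is_derive_qform_sym P_sym _; apply: hold_deriv; rewrite tk_s.
apply: (sampled_lyap_derivative_le (Delta := Delta) (tau := s - t k)) => //.
  by rewrite subr_ge0 ltW //=; apply: le_trans (t_le k); lra.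
by apply: (hold_drift_le a_ge0 a1_ge0 A_le A1_le short hold_cont hold_deriv); rewrite !ltW.
Qed.

Lemma sd_lyap_nonincreasing x : sd_solution A A1 t x ->
  forall s s', 0 <= s -> s <= s' -> qform (x s') P (x s') <= qform (x s) P (x s).
Proof.
move=> sol; have [t0 t_incr _ t_unb] := samp.
apply: (piecewise_nonincreasing t0 t_incr t_unb).
  by case: sol => x_cont _; exact: continuous_qform.
move=> k s ks; have [d Vd d_le] := sd_lyap_derivative_le sol ks.
exists d => //; apply: le_trans d_le _.
by rewrite mulNr oppr_le0 mulr_ge0 ?dotvv_ge0 // divr_ge0 // ltW.
Qed.

Lemma sd_lyap_cvg0 x : 0 < p -> (forall y, 0 <= qform y P y) -> sd_solution A A1 t x ->
  qform (x s) P (x s) @[s --> +oo] --> 0.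
Proof.
move=> p_gt0 P_psd sol; have [t0 t_incr _ t_unb] := samp.
apply: (piecewise_decay t0 t_incr t_unb (c := q / (2 * p))) => //.
- by rewrite divr_gt0 // mulr_gt0.
- by case: sol => x_cont _; exact: continuous_qform.
move=> k s ks; have [d Vd d_le] := sd_lyap_derivative_le sol ks.
exists d => //; apply: le_trans d_le _.
have V_le : qform (x s) P (x s) <= p * dotv (x s) (x s).
  by rewrite -vnorm_sqr expr2 mulrA; exact: qform_le_vnorm.
have -> : - (q / 2) * dotv (x s) (x s) = - (q / (2 * p)) * (p * dotv (x s) (x s)).
  by field; rewrite gt_eqF.
by rewrite !mulNr lerN2 ler_wpM2l // divr_ge0 ?mulr_ge0 ?ltW.
Qed.

Theorem sd_asymp_stable pl : 0 < p -> 0 < pl ->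
  (forall y, pl * dotv y y <= qform y P y) -> asymp_stable A A1 t.
Proof.
move=> p_gt0 pl_gt0 P_ge.
have P_psd y : 0 <= qform y P y.
  by apply: le_trans (P_ge y); rewrite mulr_ge0 ?dotvv_ge0 ?ltW.
split => [eps eps_gt0|].
  exists (eps * Num.sqrt (pl / p)); first by rewrite mulr_gt0 // sqrtr_gt0 divr_gt0.
  move=> x sol x0_lt s s_ge0; rewrite (vnorm_lt _ (ltW eps_gt0)) -(ltr_pM2l pl_gt0).
  apply: le_lt_trans (le_trans (P_ge _) (sd_lyap_nonincreasing sol (lexx 0) s_ge0)) _.
  apply: le_lt_trans (_ : _ <= p * dotv (x 0) (x 0)) _.
    by rewrite -vnorm_sqr expr2 mulrA; exact: qform_le_vnorm.
  have -> : pl * eps ^+ 2 = p * (eps * Num.sqrt (pl / p)) ^+ 2.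
    by rewrite exprMn sqr_sqrtr ?divr_ge0 ?ltW //; field; rewrite gt_eqF.
  rewrite ltr_pM2l // -vnorm_sqr ltr_sqr ?nnegrE ?vnorm_ge0 //.
  by rewrite mulr_ge0 ?sqrtr_ge0 ?ltW.
exists 1 => // x sol _; apply/cvgrPdist_lt => e e_gt0.
have /cvgrPdist_lt/(_ (pl * e ^+ 2)) := sd_lyap_cvg0 p_gt0 P_psd sol.
move=> /(_ (mulr_gt0 pl_gt0 (exprn_gt0 2 e_gt0))); apply: filterS => s.
rewrite !sub0r !normrN ger0_norm ?P_psd // ger0_norm ?vnorm_ge0 // => V_lt.
by rewrite (vnorm_lt _ (ltW e_gt0)) -(ltr_pM2l pl_gt0); exact: le_lt_trans (P_ge _) V_lt.
Qed.

End SampledTrajectories.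

End LyapunovDecrease.

Lemma asymp_stable_dim0 (R : realType) (A A1 : 'M[R]_0) (t : nat -> R) :
  asymp_stable A A1 t.
Proof.
have vnorm_dim0 (v : 'cV[R]_0) : vnorm v = 0 by rewrite /vnorm big_ord0 sqrtr0.
split => [eps eps_gt0|]; first by exists 1 => // x _ _ s _; rewrite vnorm_dim0.
exists 1 => // x _ _; have -> : (fun s => vnorm (x s)) = cst 0.
  by apply: funext => s; rewrite vnorm_dim0.
exact: cvg_cst.
Qed.

Lemma step_size_bounds (R : realFieldType) (Delta p L q q' : R) :
  0 < Delta -> 0 <= p -> 0 <= L -> 0 < q -> q' <= q -> q <= 2 * (p * L) ->
  Delta <= 1 / 16 * q' / (p * L ^+ 2) ->
  [/\ 0 < p, Delta * L <= 1 / 8 & Delta * (p * L ^+ 2) <= q / 16].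
Proof.
move=> D_gt0 p_ge0 L_ge0 q_gt0 q'_le q_le D_le.
have pL_gt0 : 0 < p * L by lra.
have p_gt0 : 0 < p.
  by rewrite lt_def p_ge0 andbT; apply: contraTneq pL_gt0 => ->; rewrite mul0r ltxx.
have L_gt0 : 0 < L.
  by rewrite lt_def L_ge0 andbT; apply: contraTneq pL_gt0 => ->; rewrite mulr0 ltxx.
have DpL2 : Delta * (p * L ^+ 2) <= q / 16.
  by move: D_le; rewrite ler_pdivlMr ?mulr_gt0 ?exprn_gt0 // => D_le; lra.
split => //; rewrite -(ler_pM2r pL_gt0).
have -> : Delta * L * (p * L) = Delta * (p * L ^+ 2) by ring.
lra.
Qed.

Theorem proposition1 (R : realType) :
  exists c' : R, 0 < c' /\
  forall (N m : nat) (A : 'M[R]_N) (B : 'M[R]_(N, m)) (K : 'M[R]_(m, N))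
         (P Q : 'M[R]_N),
    let A1 := - (B *m K) in
    posdef P -> posdef Q ->
    (A + A1)^T *m P + P *m (A + A1) = - Q ->
    forall (Delta : R),
      Delta <= c' * smin Q / (smax P * (smax A + smax A1) ^+ 2) ->
      forall t : nat -> R, sampling t Delta -> asymp_stable A A1 t.
Proof.
exists (1 / 16); split => [|[|n] m A B K P Q A1 P_pos Q_pos lyap Delta Delta_le t samp].
- by rewrite divr_gt0.
- exact: asymp_stable_dim0.
have n_gt0 : (0 < n.+1)%N by [].
have a_ge0 := smax_ge0 A n_gt0; have a1_ge0 := smax_ge0 A1 n_gt0.
have p_ge0 := smax_ge0 P n_gt0.
have A_le y := vnorm_mulmx_le A y n_gt0.
have A1_le y := vnorm_mulmx_le A1 y n_gt0.
have P_le y := vnorm_mulmx_le P y n_gt0.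
have [q [q_gt0 sminQ_le Q_ge]] := posdef_smin_bound n_gt0 Q_pos.
have [pl [pl_gt0 _ P_ge]] := posdef_smin_bound n_gt0 P_pos.
have P_sym : P^T = P by case: P_pos.
have Delta_gt0 : 0 < Delta.
  by case: samp => _ t_incr t_le _; apply: lt_le_trans (t_le 0%N); rewrite subr_gt0.
have rate := lyap_rate_le p_ge0 A_le A1_le P_le Q_ge P_sym lyap n_gt0.
have [p_gt0 DL DpL2] := step_size_bounds Delta_gt0 p_ge0 (addr_ge0 a_ge0 a1_ge0)
  q_gt0 sminQ_le rate Delta_le.
exact: (sd_asymp_stable a_ge0 a1_ge0 p_ge0 q_gt0 A_le A1_le P_le Q_ge P_sym lyap
  DL DpL2 samp p_gt0 pl_gt0 P_ge).
Qed.
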